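(* There exists a unique algebra homomorphism $\widetilde\natural:\mathcal H_q\to\mathfrak{W}_q$ sending $A\mapsto K_2^{-1}$, $B\mapsto \widetilde\Delta(\Lambda)=(q-q^{-1})^2(E_1+K_1^{-1}E_2)(F_1K_2+F_2)+q^{-1}K_1K_2+qK_1^{-1}K_2^{-1}$, and $C\mapsto IK_1^{-1}-q(q-q^{-1})^2E_1F_2K_2^{-1}$. Moreover $\widetilde\natural(\alpha)=\Lambda_2+\Lambda_1K_1^{-1}K_2^{-1}$, $\widetilde\natural(\beta)=IK_1^{-1}K_2^{-1}$ and $\widetilde\natural(\gamma)=\Lambda_1+\Lambda_2K_1^{-1}K_2^{-1}$.
   Context: Throughout, $q$ is a nonzero complex number that is not a root of unity; $[x,y]=xy-yx$ and $[x,y]_q=qxy-q^{-1}yx$. $\mathfrak{W}_q$ is the algebra over $\mathbb C$ generated by $E_1,E_2,F_1,F_2,K_1^{\pm1},K_2^{\pm1},I^{\pm1}$ subject to: $I$ is central; $II^{-1}=I^{-1}I=1$, $K_1K_1^{-1}=K_1^{-1}K_1=1$, $K_2K_2^{-1}=K_2^{-1}K_2=1$; $[K_1,E_2]=[K_1,F_2]=[K_1,K_2]=[K_2,E_1]=[K_2,F_1]=0$; $[E_1,K_1]_q=[K_1,F_1]_q=[E_2,K_2]_q=[K_2,F_2]_q=0$; $[E_1,E_2]=[E_1,F_2]=[F_1,E_2]=[F_1,F_2]=0$; $[E_1,F_1]=\frac{K_1-IK_1^{-1}}{q-q^{-1}}$; $[E_2,F_2]=\frac{IK_2-K_2^{-1}}{q-q^{-1}}$.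 $\Lambda_1=(q-q^{-1})^2E_1F_1+q^{-1}K_1+qIK_1^{-1}$, $\Lambda_2=(q-q^{-1})^2E_2F_2+q^{-1}IK_2+qK_2^{-1}$. The universal $q$-Hahn algebra $\mathcal H_q$ is the algebra over $\mathbb C$ generated by $A,B,C$ subject to the relations that each of $\frac{[B,C]_q}{q^2-q^{-2}}+A$, $[C,A]_q$, $\frac{[A,B]_q}{q^2-q^{-2}}+C$ commutes with $A,B,C$. Its central elements $\alpha,\beta,\gamma$ are $\alpha=\frac{[B,C]_q}{q-q^{-1}}+(q+q^{-1})A$, $\beta=\frac{[C,A]_q}{q-q^{-1}}$, $\gamma=\frac{[A,B]_q}{q-q^{-1}}+(q+q^{-1})C$. *)

From HB Require Import structures.
From mathcomp Require Import all_boot all_algebra.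
From mathcomp Require Import Rstruct complex.
Set Implicit Arguments. Unset Strict Implicit. Unset Printing Implicit Defensive.
Import GRing.Theory.
Local Open Scope ring_scope.

Definition Cplx : numClosedFieldType := Rdefinitions.R[i].

Definition not_root_of_unity (q : Cplx) : Prop :=
  q != 0 /\ forall n : nat, (0 < n)%N -> q ^+ n != 1.

Section Brackets.
Variable A : algType Cplx.
Definition comm (x y : A) : A := x * y - y * x.
Definition qcomm (q : Cplx) (x y : A) : A := q *: (x * y) - q^-1 *: (y * x).
End Brackets.

(* A choice of the 10 generators E1,E2,F1,F2,K1,K1^{-1},K2,K2^{-1},I,I^{-1}
   (the inverses are separate generators, as in the presentation). *)
Record Wgens (A : algType Cplx) := mkWgens {
  wE1 : A; wE2 : A; wF1 : A; wF2 : A;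
  wK1 : A; wK1i : A; wK2 : A; wK2i : A; wI : A; wIi : A }.

Definition Wrel (q : Cplx) (A : algType Cplx) (g : Wgens A) : Prop :=
  let E1 := wE1 g in let E2 := wE2 g in let F1 := wF1 g in let F2 := wF2 g in
  let K1 := wK1 g in let K1i := wK1i g in let K2 := wK2 g in
  let K2i := wK2i g in let I := wI g in let Ii := wIi g in
  (comm I E1 = 0 /\ comm I E2 = 0 /\ comm I F1 = 0 /\ comm I F2 = 0 /\
   comm I K1 = 0 /\ comm I K1i = 0 /\ comm I K2 = 0 /\ comm I K2i = 0 /\
   comm I Ii = 0) /\
  (I * Ii = 1 /\ Ii * I = 1 /\ K1 * K1i = 1 /\ K1i * K1 = 1 /\
   K2 * K2i = 1 /\ K2i * K2 = 1) /\
  [/\ comm K1 E2 = 0, comm K1 F2 = 0, comm K1 K2 = 0,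
      comm K2 E1 = 0 & comm K2 F1 = 0] /\
  [/\ qcomm q E1 K1 = 0, qcomm q K1 F1 = 0,
      qcomm q E2 K2 = 0 & qcomm q K2 F2 = 0] /\
  [/\ comm E1 E2 = 0, comm E1 F2 = 0, comm F1 E2 = 0 & comm F1 F2 = 0] /\
  comm E1 F1 = (q - q^-1)^-1 *: (K1 - I * K1i) /\
  comm E2 F2 = (q - q^-1)^-1 *: (I * K2 - K2i).

Definition Wmaps (A B : algType Cplx) (f : A -> B) (g : Wgens A) (h : Wgens B) :=
  f (wE1 g) = wE1 h /\ f (wE2 g) = wE2 h /\ f (wF1 g) = wF1 h /\
  f (wF2 g) = wF2 h /\ f (wK1 g) = wK1 h /\ f (wK1i g) = wK1i h /\
  f (wK2 g) = wK2 h /\ f (wK2i g) = wK2i h /\ f (wI g) = wI h /\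
  f (wIi g) = wIi h.

(* (A, g) is a presentation of W_q: g satisfies the relations and (A, g) is
   universal, i.e. A is the algebra generated by g subject to the relations. *)
Definition is_Wq (q : Cplx) (A : algType Cplx) (g : Wgens A) : Prop :=
  Wrel q g /\
  forall (B : algType Cplx) (h : Wgens B), Wrel q h ->
    exists f : {lrmorphism A -> B}, Wmaps f g h /\
      forall f' : {lrmorphism A -> B}, Wmaps f' g h -> forall x, f' x = f x.

Definition Lambda1 (q : Cplx) (A : algType Cplx) (g : Wgens A) : A :=
  (q - q^-1) ^+ 2 *: (wE1 g * wF1 g) + q^-1 *: wK1 g + q *: (wI g * wK1i g).
Definition Lambda2 (q : Cplx) (A : algType Cplx) (g : Wgens A) : A :=
  (q - q^-1) ^+ 2 *: (wE2 g * wF2 g) + q^-1 *: (wI g * wK2 g) + q *: wK2i g.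

Definition Hrel (q : Cplx) (A : algType Cplx) (a b c : A) : Prop :=
  let X1 := (q ^+ 2 - q^-2)^-1 *: qcomm q b c + a in
  let X2 := qcomm q c a in
  let X3 := (q ^+ 2 - q^-2)^-1 *: qcomm q a b + c in
  (comm X1 a = 0 /\ comm X1 b = 0 /\ comm X1 c = 0) /\
  (comm X2 a = 0 /\ comm X2 b = 0 /\ comm X2 c = 0) /\
  (comm X3 a = 0 /\ comm X3 b = 0 /\ comm X3 c = 0).

Definition is_Hq (q : Cplx) (H : algType Cplx) (a b c : H) : Prop :=
  Hrel q a b c /\
  forall (B : algType Cplx) (a' b' c' : B), Hrel q a' b' c' ->
    exists f : {lrmorphism H -> B}, [/\ f a = a', f b = b' & f c = c'] /\
      forall f' : {lrmorphism H -> B}, [/\ f' a = a', f' b = b' & f' c = c'] ->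
        forall x, f' x = f x.

Definition Halpha (q : Cplx) (H : algType Cplx) (a b c : H) : H :=
  (q - q^-1)^-1 *: qcomm q b c + (q + q^-1) *: a.
Definition Hbeta (q : Cplx) (H : algType Cplx) (a b c : H) : H :=
  (q - q^-1)^-1 *: qcomm q c a.
Definition Hgamma (q : Cplx) (H : algType Cplx) (a b c : H) : H :=
  (q - q^-1)^-1 *: qcomm q a b + (q + q^-1) *: c.

From HB Require Import structures.
From mathcomp Require Import all_boot all_algebra.
From mathcomp Require Import Rstruct complex.
From mathcomp Require Import ring.
Set Implicit Arguments. Unset Strict Implicit. Unset Printing Implicit Defensive.
Import GRing.Theory.
Local Open Scope ring_scope.

(* The relations of H_q say that [B,C]_q/(q^2 - q^-2) + A, [C,A]_q and
   [A,B]_q/(q^2 - q^-2) + C are central; as q^2 - q^-2 = (q + q^-1)(q - q^-1) is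
   invertible, these are invertible multiples of alpha, beta and gamma.  So the
   proposed images of A, B, C satisfy the relations of H_q as soon as the
   corresponding images of alpha, beta, gamma, which compute to
   Lambda2 + Lambda1 K1^-1 K2^-1, I K1^-1 K2^-1 and Lambda1 + Lambda2 K1^-1 K2^-1,
   commute with them; the universal property of H_q then gives the unique
   homomorphism.  These identities in W_q are checked by reflection: the relations
   of W_q, oriented as rewriting rules, move the generators into the order
   E1 E2 K1 K1^-1 K2 K2^-1 I F1 F2 with coefficients in Z[q, q^-1, (q - q^-1)^-1],
   and an identity holds when the difference of its two sides rewrites to zero. *)

(** * Coefficients *)

(* [(k, e) : lmonom] stands for k q^e and [((k, e), n) : cmonom] for
   k q^e (q - q^-1)^-n; lists of monomials stand for their sums. *)
Definition lmonom := (int * int)%type.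
Definition cmonom := (lmonom * nat)%type.

Definition lmul (l1 l2 : seq lmonom) : seq lmonom :=
  [seq (m.1 * n.1, m.2 + n.2) | m <- l1, n <- l2].
Definition cmul (c1 c2 : seq cmonom) : seq cmonom :=
  [seq ((m.1.1 * n.1.1, m.1.2 + n.1.2), (m.2 + n.2)%N) | m <- c1, n <- c2].

Fixpoint qdiff_pow (n : nat) : seq lmonom :=
  if n is n'.+1 then lmul [:: (1, 1); (-1, -1)] (qdiff_pow n') else [:: (1, 0)].

Definition sdeg (c : seq cmonom) : nat := foldr (fun m n => maxn m.2 n) 0%N c.

Definition clear_denoms (c : seq cmonom) : seq lmonom :=
  flatten [seq lmul [:: m.1] (qdiff_pow (sdeg c - m.2)) | m <- c].

Definition int_sum (l : seq lmonom) : int := foldr (fun m s => m.1 + s) 0 l.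

(* Checks that the coefficients of each power of q sum to zero, one power per round. *)
Fixpoint lzero_test (fuel : nat) (l : seq lmonom) : bool :=
  if l is m :: r then
    if fuel is fuel'.+1 then
      (m.1 + int_sum [seq x <- r | x.2 == m.2] == 0) &&
      lzero_test fuel' [seq x <- r | x.2 != m.2]
    else false
  else true.

Definition czero_test (c : seq cmonom) : bool :=
  let l := clear_denoms c in lzero_test (size l) l.

Section CoefficientEvaluation.
Variables (F : fieldType) (q : F).
Hypotheses (q_neq0 : q != 0) (qdiff_neq0 : q - q^-1 != 0).

Definition leval (l : seq lmonom) : F := \sum_(m <- l) m.1%:~R * q ^ m.2.
Definition ceval (c : seq cmonom) : F :=
  \sum_(m <- c) m.1.1%:~R * q ^ m.1.2 * (q - q^-1)^-1 ^+ m.2.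

Lemma leval_mul l1 l2 : leval (lmul l1 l2) = leval l1 * leval l2.
Proof.
rewrite /leval big_allpairs_dep mulr_suml; apply: eq_bigr => m _.
rewrite mulr_sumr; apply: eq_bigr => n _.
by rewrite intrM expfzDr // mulrACA.
Qed.

Lemma ceval_mul c1 c2 : ceval (cmul c1 c2) = ceval c1 * ceval c2.
Proof.
rewrite /ceval big_allpairs_dep mulr_suml; apply: eq_bigr => m _.
rewrite mulr_sumr; apply: eq_bigr => n _.
rewrite /= intrM expfzDr // exprD; ring.
Qed.

Lemma leval_qdiff_pow n : leval (qdiff_pow n) = (q - q^-1) ^+ n.
Proof.
elim: n => [|n IH] /=; first by rewrite /leval big_seq1 mul1r expr0z.
by rewrite leval_mul IH /leval !big_cons big_nil /= expr1z exprN1 exprS mulN1r mul1r addr0.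
Qed.

Lemma sdeg_ge c m : m \in c -> (m.2 <= sdeg c)%N.
Proof.
elim: c => [|x c IH] //=; rewrite inE => /predU1P [-> | /IH le_m].
  exact: leq_maxl.
exact: leq_trans le_m (leq_maxr _ _).
Qed.

Lemma leval_clear_denoms c :
  leval (clear_denoms c) = (q - q^-1) ^+ sdeg c * ceval c.
Proof.
rewrite /leval /clear_denoms big_flatten big_map /ceval mulr_sumr big_seq [RHS]big_seq.
apply: eq_bigr => m /sdeg_ge le_m.
rewrite -/(leval _) leval_mul leval_qdiff_pow /leval big_seq1.
have -> : (q - q^-1) ^+ sdeg c = (q - q^-1) ^+ (sdeg c - m.2) * (q - q^-1) ^+ m.2.
  by rewrite -exprD subnK.
by rewrite exprVn; field; rewrite expf_neq0.
Qed.

Lemma int_sumE l : int_sum l = \sum_(m <- l) m.1.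
Proof. by elim: l => [|m l IH]; rewrite ?big_nil ?big_cons //= IH. Qed.

Lemma leval_cons_split m l :
  leval (m :: l) = leval (m :: [seq x <- l | x.2 == m.2]) + leval [seq x <- l | x.2 != m.2].
Proof. by rewrite /leval !big_cons (bigID (fun x : lmonom => x.2 == m.2)) !big_filter addrA. Qed.

Lemma lzero_test_sound n l : lzero_test n l -> leval l = 0.
Proof.
elim: n l => [|n IH] [|m l] //=; try by rewrite /leval big_nil.
move=> /andP [/eqP sum0 /IH rest].
rewrite leval_cons_split rest addr0 /leval big_cons big_filter.
rewrite (eq_bigr (fun x : lmonom => x.1%:~R * q ^ m.2)); last by move=> x /eqP ->.
by rewrite -mulr_suml -mulrDl -rmorph_sum -intrD -big_filter -int_sumE sum0 mul0r.
Qed.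

Lemma czero_test_sound c : czero_test c -> ceval c = 0.
Proof.
move/lzero_test_sound/eqP; rewrite leval_clear_denoms mulf_eq0 expf_eq0.
by rewrite (negPf qdiff_neq0) andbF => /eqP.
Qed.
End CoefficientEvaluation.

(** * Normal ordering in W_q *)

(* A word lists generator indices; an ncpoly is a sum of coefficient-word pairs. *)
Definition word := seq nat.
Definition ncpoly := seq (seq cmonom * word).

Definition qpow (e : int) : seq cmonom := [:: (1, e, 0%N)].
Definition cminus1 : seq cmonom := [:: ((-1)%Z, 0%Z, 0%N)].
Definition qinvdiff (k : int) : seq cmonom := [:: (k, 0%Z, 1%N)].
Definition ncword (w : word) : ncpoly := [:: (qpow 0, w)].
Definition ncmul (p r : ncpoly) : ncpoly :=
  [seq (cmul m.1 n.1, m.2 ++ n.2) | m <- p, n <- r].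
Definition ncscale (c : seq cmonom) (p : ncpoly) : ncpoly := ncmul [:: (c, [::])] p.

(* [rule x y] rewrites the word [x y] when [x > y] or when [x y] is [K K^-1];
   the generators are numbered in the order E1 E2 K1 K1^-1 K2 K2^-1 I F1 F2. *)
Definition swap_by (c : seq cmonom) (y x : nat) : ncpoly := [:: (c, [:: y; x])].
Definition plain_swap := swap_by (qpow 0).
Definition qswap := swap_by (qpow 2%Z).
Definition qswapV := swap_by (qpow (-2)%Z).
Definition ncone := ncword [::].

(* [f e = e f - (q - q^-1)^-1 (k - k')] *)
Definition ef_swap (e f : nat) (k k' : word) : ncpoly :=
  [:: (qpow 0, [:: e; f]); (qinvdiff (-1), k); (qinvdiff 1, k')].

Definition rule (x y : nat) : option ncpoly :=
  match x, y with
  | 1, 0 => Some (plain_swap 0 1)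
  | 2, 0 => Some (qswap 0 2)
  | 2, 1 => Some (plain_swap 1 2)
  | 2, 3 => Some ncone
  | 3, 0 => Some (qswapV 0 3)
  | 3, 1 => Some (plain_swap 1 3)
  | 3, 2 => Some ncone
  | 4, 0 => Some (plain_swap 0 4)
  | 4, 1 => Some (qswap 1 4)
  | 4, 2 => Some (plain_swap 2 4)
  | 4, 3 => Some (plain_swap 3 4)
  | 4, 5 => Some ncone
  | 5, 0 => Some (plain_swap 0 5)
  | 5, 1 => Some (qswapV 1 5)
  | 5, 2 => Some (plain_swap 2 5)
  | 5, 3 => Some (plain_swap 3 5)
  | 5, 4 => Some ncone
  | 6, 0 => Some (plain_swap 0 6)
  | 6, 1 => Some (plain_swap 1 6)
  | 6, 2 => Some (plain_swap 2 6)
  | 6, 3 => Some (plain_swap 3 6)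
  | 6, 4 => Some (plain_swap 4 6)
  | 6, 5 => Some (plain_swap 5 6)
  | 7, 0 => Some (ef_swap 0 7 [:: 2] [:: 3; 6])
  | 7, 1 => Some (plain_swap 1 7)
  | 7, 2 => Some (qswap 2 7)
  | 7, 3 => Some (qswapV 3 7)
  | 7, 4 => Some (plain_swap 4 7)
  | 7, 5 => Some (plain_swap 5 7)
  | 7, 6 => Some (plain_swap 6 7)
  | 8, 0 => Some (plain_swap 0 8)
  | 8, 1 => Some (ef_swap 1 8 [:: 4; 6] [:: 5])
  | 8, 2 => Some (plain_swap 2 8)
  | 8, 3 => Some (plain_swap 3 8)
  | 8, 4 => Some (qswap 4 8)
  | 8, 5 => Some (qswapV 5 8)
  | 8, 6 => Some (plain_swap 6 8)
  | 8, 7 => Some (plain_swap 7 8)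
  | _, _ => None
  end.

Fixpoint rewrite_word (w : word) : option ncpoly :=
  if w is x :: w' then
    if w' is y :: t then
      if rule x y is Some p then Some (ncmul p (ncword t))
      else omap (ncmul [:: (qpow 0, [:: x])]) (rewrite_word w')
    else None
  else None.

Definition rewrite_step (p : ncpoly) : ncpoly :=
  flatten [seq if rewrite_word m.2 is Some p' then ncscale m.1 p' else [:: m] | m <- p].

Fixpoint nczero_test (fuel : nat) (p : ncpoly) : bool :=
  if p is m :: r then
    if fuel is fuel'.+1 then
      czero_test (m.1 ++ flatten [seq x.1 | x <- r & x.2 == m.2]) &&
      nczero_test fuel' [seq x <- r | x.2 != m.2]
    else false
  else true.

Inductive sexpr := SQ | SQinv | SInvDiff | SAdd of sexpr & sexpr
  | SSub of sexpr & sexpr | SMul of sexpr & sexpr | SExp of sexpr & nat.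
Inductive wexpr := WGen of nat | WAdd of wexpr & wexpr | WSub of wexpr & wexpr
  | WMul of wexpr & wexpr | WScale of sexpr & wexpr | WOne | WZero.

Fixpoint sexpr_coef (e : sexpr) : seq cmonom :=
  match e with
  | SQ => qpow 1 | SQinv => qpow (-1)%Z | SInvDiff => qinvdiff 1
  | SAdd a b => sexpr_coef a ++ sexpr_coef b
  | SSub a b => sexpr_coef a ++ cmul cminus1 (sexpr_coef b)
  | SMul a b => cmul (sexpr_coef a) (sexpr_coef b)
  | SExp a n => iter n (cmul (sexpr_coef a)) (qpow 0)
  end.

Fixpoint wexpr_poly (e : wexpr) : ncpoly :=
  match e with
  | WGen n => ncword [:: n]
  | WAdd a b => wexpr_poly a ++ wexpr_poly b
  | WSub a b => wexpr_poly a ++ ncscale cminus1 (wexpr_poly b)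
  | WMul a b => ncmul (wexpr_poly a) (wexpr_poly b)
  | WScale c a => ncscale (sexpr_coef c) (wexpr_poly a)
  | WOne => ncone
  | WZero => [::]
  end.

Definition nc_check (e : wexpr) : bool :=
  let p := iter 200 rewrite_step (wexpr_poly e) in nczero_test (size p) p.

Section NCEvaluation.
Variables (F : fieldType) (q : F) (W : algType F) (gen : nat -> W).
Hypotheses (q_neq0 : q != 0) (qdiff_neq0 : q - q^-1 != 0).

Definition weval (w : word) : W := \prod_(n <- w) gen n.
Definition peval (p : ncpoly) : W := \sum_(m <- p) ceval q m.1 *: weval m.2.

Lemma ceval_qpow e : ceval q (qpow e) = q ^ e.
Proof. by rewrite /ceval big_seq1 /= mul1r mulr1. Qed.

Lemma peval_ncword w : peval (ncword w) = weval w.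
Proof. by rewrite /peval big_seq1 ceval_qpow expr0z scale1r. Qed.

Lemma peval_cat p r : peval (p ++ r) = peval p + peval r.
Proof. exact: big_cat. Qed.

Lemma peval_mul p r : peval (ncmul p r) = peval p * peval r.
Proof.
rewrite /peval big_allpairs_dep mulr_suml; apply: eq_bigr => m _.
rewrite mulr_sumr; apply: eq_bigr => n _.
by rewrite ceval_mul // /weval big_cat -scalerAl -scalerAr scalerA.
Qed.

Lemma peval_scale c p : peval (ncscale c p) = ceval q c *: peval p.
Proof.
by rewrite peval_mul /peval big_seq1 /weval big_nil -scalerAl mul1r.
Qed.

Lemma peval_swap_by c y x : peval (swap_by c y x) = ceval q c *: (gen y * gen x).
Proof. by rewrite /peval big_seq1 /weval big_cons big_seq1. Qed.

Lemma peval_ef_swap e f k k' : peval (ef_swap e f k k') =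
  gen e * gen f - (q - q^-1)^-1 *: (weval k - weval k').
Proof.
rewrite /peval !big_cons big_nil ceval_qpow /ceval !big_seq1 /= expr0z expr1 scale1r.
rewrite /weval big_cons big_seq1 mulr1 mulN1r mul1r scaleNr addr0 scalerBr opprB.
by rewrite div1r addrA addrAC -addrA.
Qed.

Hypothesis rule_sound : forall x y p, rule x y = Some p -> gen x * gen y = peval p.

Lemma rewrite_word_cons x y t : rewrite_word [:: x, y & t] =
  if rule x y is Some p then Some (ncmul p (ncword t))
  else omap (ncmul [:: (qpow 0, [:: x])]) (rewrite_word (y :: t)).
Proof. by []. Qed.

Lemma rewrite_word_sound w p : rewrite_word w = Some p -> weval w = peval p.
Proof.
elim: w p => [|x [|y t] IH] p //; rewrite rewrite_word_cons.
case rxy: (rule x y) => [r|].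
  by move=> [<-]; rewrite peval_mul peval_ncword -(rule_sound rxy) /weval !big_cons mulrA.
case: (rewrite_word (y :: t)) IH => [r /(_ r erefl) IH [<-]|] //.
by rewrite peval_mul peval_ncword /weval big_cons big_seq1 -IH.
Qed.

Lemma rewrite_step_sound p : peval (rewrite_step p) = peval p.
Proof.
rewrite /rewrite_step /peval big_flatten big_map; apply: eq_bigr => m _.
case rw: (rewrite_word m.2) => [r|]; last by rewrite big_seq1.
by rewrite -/(peval _) peval_scale -(rewrite_word_sound rw).
Qed.

Lemma iter_rewrite_step_sound n p : peval (iter n rewrite_step p) = peval p.
Proof. by elim: n => //= n IH; rewrite rewrite_step_sound. Qed.

Lemma peval_cons_split m p : peval (m :: p) =
  peval (m :: [seq x <- p | x.2 == m.2]) + peval [seq x <- p | x.2 != m.2].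
Proof.
by rewrite /peval !big_cons (bigID (fun x : seq cmonom * word => x.2 == m.2)) !big_filter addrA.
Qed.

Lemma nczero_test_sound n p : nczero_test n p -> peval p = 0.
Proof.
elim: n p => [|n IH] [|m p] //=; try by rewrite /peval big_nil.
move=> /andP [/(czero_test_sound q_neq0 qdiff_neq0) c0 /IH rest].
rewrite peval_cons_split rest addr0 /peval big_cons big_filter.
rewrite (eq_bigr (fun x => ceval q x.1 *: weval m.2)); last by move=> x /eqP ->.
have sum0 : ceval q m.1 + \sum_(x <- [seq x <- p | x.2 == m.2]) ceval q x.1 = 0.
  by move: c0; rewrite /ceval big_cat big_flatten big_map.
by rewrite -scaler_suml -scalerDl -big_filter sum0 scale0r.
Qed.

Fixpoint seval (e : sexpr) : F :=
  match e with
  | SQ => q | SQinv => q^-1 | SInvDiff => (q - q^-1)^-1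
  | SAdd a b => seval a + seval b | SSub a b => seval a - seval b
  | SMul a b => seval a * seval b | SExp a n => seval a ^+ n
  end.

Fixpoint weval_expr (e : wexpr) : W :=
  match e with
  | WGen n => gen n
  | WAdd a b => weval_expr a + weval_expr b | WSub a b => weval_expr a - weval_expr b
  | WMul a b => weval_expr a * weval_expr b | WScale c a => seval c *: weval_expr a
  | WOne => 1 | WZero => 0
  end.

Lemma ceval_cminus1 : ceval q cminus1 = -1.
Proof. by rewrite /ceval big_seq1 /= expr0z expr0 !mulr1. Qed.

Lemma sexpr_coef_sound e : ceval q (sexpr_coef e) = seval e.
Proof.
elim: e => /=.
- by rewrite ceval_qpow expr1z.
- by rewrite ceval_qpow exprN1.
- by rewrite /ceval big_seq1 /= mul1r expr0z mul1r expr1.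
- by move=> a IHa b IHb; rewrite /ceval big_cat -!/(ceval _ _) IHa IHb.
- by move=> a IHa b IHb; rewrite /ceval big_cat -!/(ceval _ _) ceval_mul // ceval_cminus1 IHa IHb mulN1r.
- by move=> a IHa b IHb; rewrite ceval_mul // IHa IHb.
- move=> a IHa n; elim: n => [|n IHn] /=; first by rewrite ceval_qpow expr0z.
  by rewrite ceval_mul // IHn IHa exprS.
Qed.

Lemma wexpr_poly_sound e : peval (wexpr_poly e) = weval_expr e.
Proof.
elim: e => /=.
- by move=> n; rewrite peval_ncword /weval big_seq1.
- by move=> a IHa b IHb; rewrite peval_cat IHa IHb.
- by move=> a IHa b IHb; rewrite peval_cat peval_scale ceval_cminus1 IHa IHb scaleN1r.
- by move=> a IHa b IHb; rewrite peval_mul IHa IHb.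
- by move=> c a IHa; rewrite peval_scale IHa sexpr_coef_sound.
- by rewrite peval_ncword /weval big_nil.
- by rewrite /peval big_nil.
Qed.

Lemma nc_check_sound e1 e2 :
  nc_check (WSub e1 e2) -> weval_expr e1 = weval_expr e2.
Proof.
move=> /nczero_test_sound; rewrite iter_rewrite_step_sound wexpr_poly_sound /=.
by move/eqP; rewrite subr_eq0 => /eqP.
Qed.
End NCEvaluation.

Lemma comm_eq0 (A : algType Cplx) (x y : A) : comm x y = 0 -> x * y = y * x.
Proof. by move/eqP; rewrite subr_eq0 => /eqP. Qed.

Lemma comm_swap (A : algType Cplx) (x y z : A) : comm x y = z -> y * x = x * y - z.
Proof. by move=> <-; rewrite /comm opprB addrC subrK. Qed.

Lemma qcomm_eq0 (A : algType Cplx) (q : Cplx) (x y : A) : q != 0 ->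
  qcomm q x y = 0 -> y * x = q ^+ 2 *: (x * y).
Proof.
move=> q_neq0 /eqP; rewrite subr_eq0 => /eqP xy.
by rewrite expr2 -scalerA xy scalerA mulfV ?scale1r.
Qed.

Section TwistedCommutation.
Variables (F : fieldType) (A : algType F) (k ki x : A) (c : F).
Hypotheses (k_ki : k * ki = 1) (ki_k : ki * k = 1) (c_neq0 : c != 0).

Lemma twist_invl : k * x = c *: (x * k) -> ki * x = c^-1 *: (x * ki).
Proof.
move=> kx; have xk : x * k = c^-1 *: (k * x) by rewrite kx scalerA mulVf ?scale1r.
rewrite -[ki * x]mulr1 -k_ki mulrA -(mulrA ki) xk -scalerCA -!scalerAl.
by rewrite mulrA ki_k mul1r.
Qed.

Lemma twist_invr : x * k = c *: (k * x) -> x * ki = c^-1 *: (ki * x).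
Proof.
move=> xk; have kx : k * x = c^-1 *: (x * k) by rewrite xk scalerA mulVf ?scale1r.
rewrite -[x * ki]mul1r -ki_k -mulrA (mulrA k) kx -scalerAl -scalerCA -scalerAl.
by rewrite -(mulrA x) k_ki mulr1.
Qed.
End TwistedCommutation.

Lemma commute_inv (F : fieldType) (A : algType F) (k ki x : A) :
  k * ki = 1 -> ki * k = 1 -> k * x = x * k -> ki * x = x * ki.
Proof.
move=> k_ki ki_k kx.
by rewrite (twist_invl (c := 1) k_ki ki_k) ?oner_eq0 ?invr1 ?scale1r // kx scale1r.
Qed.

Definition Wgen (W : algType Cplx) (g : Wgens W) (n : nat) : W :=
  match n with
  | 0 => wE1 g | 1 => wE2 g | 2 => wK1 g | 3 => wK1i g | 4 => wK2 g
  | 5 => wK2i g | 6 => wI g | 7 => wF1 g | _ => wF2 g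
  end.

Lemma Wrel_rule_sound (q : Cplx) (W : algType Cplx) (g : Wgens W) :
  q != 0 -> Wrel q g ->
  forall x y p, rule x y = Some p -> Wgen g x * Wgen g y = peval q (Wgen g) p.
Proof.
move=> q_neq0 [[/comm_eq0 IE1 [/comm_eq0 IE2 [/comm_eq0 IF1 [/comm_eq0 IF2
  [/comm_eq0 IK1 [/comm_eq0 IK1i [/comm_eq0 IK2 [/comm_eq0 IK2i _]]]]]]]]
  [[_ [_ [K1K1i [K1iK1 [K2K2i K2iK2]]]]]]
  [[/comm_eq0 K1E2 /comm_eq0 K1F2 /comm_eq0 K1K2 /comm_eq0 K2E1 /comm_eq0 K2F1]
  [[/(qcomm_eq0 q_neq0) E1K1 /(qcomm_eq0 q_neq0) K1F1
    /(qcomm_eq0 q_neq0) E2K2 /(qcomm_eq0 q_neq0) K2F2]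
  [[/comm_eq0 E1E2 /comm_eq0 E1F2 /comm_eq0 F1E2 /comm_eq0 F1F2]
  [/comm_swap F1E1 /comm_swap F2E2]]]]].
have q2_neq0 : q ^+ 2 != 0 by rewrite expf_neq0.
have K1iE1 := twist_invl K1K1i K1iK1 q2_neq0 E1K1.
have K2iE2 := twist_invl K2K2i K2iK2 q2_neq0 E2K2.
have F1K1i := twist_invr K1K1i K1iK1 q2_neq0 K1F1.
have F2K2i := twist_invr K2K2i K2iK2 q2_neq0 K2F2.
have K1iE2 := commute_inv K1K1i K1iK1 K1E2.
have K1iF2 := commute_inv K1K1i K1iK1 K1F2.
have K1iK2 := commute_inv K1K1i K1iK1 K1K2.
have K2iE1 := commute_inv K2K2i K2iK2 K2E1.
have K2iF1 := commute_inv K2K2i K2iK2 K2F1.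
have K2iK1 := commute_inv K2K2i K2iK2 (esym K1K2).
have K2iK1i := commute_inv K2K2i K2iK2 (esym K1iK2).
move=> x y p; rewrite /rule; do 9?(case: x => [|x]); do 9?(case: y => [|y]); try discriminate.
all: move=> [<-]; rewrite ?peval_swap_by ?ceval_qpow ?expr0z ?scale1r ?peval_ncword.
all: rewrite ?peval_ef_swap /weval ?big_nil ?big_cons ?big_nil ?mulr1 //=.
- by rewrite F1E1 IK1i.
- by rewrite F2E2 IK2.
Qed.

Ltac reify_scalar q t :=
  lazymatch t with
  | (q - q^-1)^-1 => constr:(SInvDiff)
  | q^-1 => constr:(SQinv)
  | q => constr:(SQ)
  | ?a - ?b => let x := reify_scalar q a in let y := reify_scalar q b in constr:(SSub x y)
  | ?a + ?b => let x := reify_scalar q a in let y := reify_scalar q b in constr:(SAdd x y)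
  | ?a * ?b => let x := reify_scalar q a in let y := reify_scalar q b in constr:(SMul x y)
  | ?a ^+ ?n => let x := reify_scalar q a in constr:(SExp x n)
  end.

Ltac reify_W q g t :=
  lazymatch t with
  | wE1 g => constr:(WGen 0) | wE2 g => constr:(WGen 1) | wK1 g => constr:(WGen 2)
  | wK1i g => constr:(WGen 3) | wK2 g => constr:(WGen 4) | wK2i g => constr:(WGen 5)
  | wI g => constr:(WGen 6) | wF1 g => constr:(WGen 7) | wF2 g => constr:(WGen 8)
  | ?a - ?b => let x := reify_W q g a in let y := reify_W q g b in constr:(WSub x y)
  | ?a + ?b => let x := reify_W q g a in let y := reify_W q g b in constr:(WAdd x y)
  | ?c *: ?a => let x := reify_scalar q c in let y := reify_W q g a in constr:(WScale x y)
  | ?a * ?b => let x := reify_W q g a in let y := reify_W q g b in constr:(WMul x y)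
  | 1 => constr:(WOne)
  | 0 => constr:(WZero)
  end.

Ltac Wq_normalize q g q_neq0 qdiff_neq0 hW :=
  rewrite /Halpha /Hbeta /Hgamma /Lambda1 /Lambda2 /comm /qcomm;
  lazymatch goal with |- ?L = ?R =>
    let e1 := reify_W q g L in let e2 := reify_W q g R in
    change (weval_expr q (Wgen g) e1 = weval_expr q (Wgen g) e2);
    apply: (nc_check_sound q_neq0 qdiff_neq0 (Wrel_rule_sound q_neq0 hW));
    vm_compute; reflexivity
  end.

(** * The q-Hahn relations for the proposed images *)

Lemma comm_scale_eq0 (A : algType Cplx) (k : Cplx) (x y : A) :
  comm x y = 0 -> comm (k *: x) y = 0.
Proof. by rewrite /comm -scalerAl -scalerAr -scalerBr => ->; rewrite scaler0. Qed.

Lemma Hrel_of_central (q : Cplx) (A : algType Cplx) (a b c : A) :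
  q - q^-1 != 0 -> q + q^-1 != 0 ->
  (forall z x, z \in [:: Halpha q a b c; Hbeta q a b c; Hgamma q a b c] ->
     x \in [:: a; b; c] -> comm z x = 0) ->
  Hrel q a b c.
Proof.
move=> qdiff_neq0 qsum_neq0 central.
have q2diff : q ^+ 2 - q^-2 = (q + q^-1) * (q - q^-1) by rewrite -exprVn subr_sqr mulrC.
have X1 : (q ^+ 2 - q^-2)^-1 *: qcomm q b c + a = (q + q^-1)^-1 *: Halpha q a b c.
  by rewrite q2diff invfM /Halpha [RHS]scalerDr !scalerA mulVf ?scale1r.
have X2 : qcomm q c a = (q - q^-1) *: Hbeta q a b c.
  by rewrite /Hbeta scalerA mulfV // scale1r.
have X3 : (q ^+ 2 - q^-2)^-1 *: qcomm q a b + c = (q + q^-1)^-1 *: Hgamma q a b c.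
  by rewrite q2diff invfM /Hgamma [RHS]scalerDr !scalerA mulVf ?scale1r.
rewrite /Hrel X1 X2 X3; do !split; apply: comm_scale_eq0; apply: central;
  by rewrite !inE eqxx ?orbT.
Qed.

Section NaturalMap.
Variables (q : Cplx) (W : algType Cplx) (g : Wgens W).
Hypotheses (q_neq0 : q != 0) (qdiff_neq0 : q - q^-1 != 0) (hW : Wrel q g).

Definition natA : W := wK2i g.
Definition natB : W :=
  (q - q^-1) ^+ 2 *: ((wE1 g + wK1i g * wE2 g) * (wF1 g * wK2 g + wF2 g))
  + q^-1 *: (wK1 g * wK2 g) + q *: (wK1i g * wK2i g).
Definition natC : W := wI g * wK1i g - (q * (q - q^-1) ^+ 2) *: (wE1 g * wF2 g * wK2i g).

Lemma natural_alpha :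
  Halpha q natA natB natC = Lambda2 q g + Lambda1 q g * wK1i g * wK2i g.
Proof. rewrite /natA /natB /natC; Wq_normalize q g q_neq0 qdiff_neq0 hW. Qed.

Lemma natural_beta : Hbeta q natA natB natC = wI g * wK1i g * wK2i g.
Proof. rewrite /natA /natB /natC; Wq_normalize q g q_neq0 qdiff_neq0 hW. Qed.

Lemma natural_gamma :
  Hgamma q natA natB natC = Lambda1 q g + Lambda2 q g * wK1i g * wK2i g.
Proof. rewrite /natA /natB /natC; Wq_normalize q g q_neq0 qdiff_neq0 hW. Qed.

Lemma natural_central z x :
  z \in [:: Halpha q natA natB natC; Hbeta q natA natB natC; Hgamma q natA natB natC] ->
  x \in [:: natA; natB; natC] -> comm z x = 0.
Proof.
rewrite natural_alpha natural_beta natural_gamma !inE.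
by move=> /or3P [] /eqP -> /or3P [] /eqP ->; rewrite /natA /natB /natC;
  Wq_normalize q g q_neq0 qdiff_neq0 hW.
Qed.

Lemma natural_Hrel : q + q^-1 != 0 -> Hrel q natA natB natC.
Proof. by move=> qsum_neq0; apply: Hrel_of_central => //; apply: natural_central. Qed.
End NaturalMap.

Section MorphismImages.
Variables (q : Cplx) (A B : algType Cplx) (f : {lrmorphism A -> B}) (a b c : A).

Lemma lrmorph_qcomm x y : f (qcomm q x y) = qcomm q (f x) (f y).
Proof. by rewrite /qcomm linearB /= !linearZ /= !(rmorphM f). Qed.

Lemma lrmorph_Halpha : f (Halpha q a b c) = Halpha q (f a) (f b) (f c).
Proof. by rewrite /Halpha linearD /= !linearZ /= lrmorph_qcomm. Qed.

Lemma lrmorph_Hbeta : f (Hbeta q a b c) = Hbeta q (f a) (f b) (f c).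
Proof. by rewrite /Hbeta linearZ /= lrmorph_qcomm. Qed.

Lemma lrmorph_Hgamma : f (Hgamma q a b c) = Hgamma q (f a) (f b) (f c).
Proof. by rewrite /Hgamma linearD /= !linearZ /= lrmorph_qcomm. Qed.
End MorphismImages.

Lemma sub_inv_neq0 (F : fieldType) (x : F) : x != 0 -> x ^+ 2 != 1 -> x - x^-1 != 0.
Proof.
move=> x_neq0 x2_neq1; have -> : x - x^-1 = (x ^+ 2 - 1) / x by field.
by rewrite mulf_neq0 ?invr_eq0 // subr_eq0.
Qed.

Lemma add_inv_neq0 (F : fieldType) (x : F) : x != 0 -> x ^+ 4 != 1 -> x + x^-1 != 0.
Proof.
move=> x_neq0 x4_neq1; have -> : x + x^-1 = (x ^+ 2 + 1) / x by field.
rewrite mulf_neq0 ?invr_eq0 // addr_eq0; apply: contraNneq x4_neq1 => x2.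
by rewrite (exprM x 2 2) x2 sqrrN expr1n.
Qed.

Theorem mainTheorem5 (q : Cplx) (hq : not_root_of_unity q)
  (W : algType Cplx) (g : Wgens W) (hW : is_Wq q g)
  (H : algType Cplx) (a b c : H) (hH : is_Hq q a b c) :
  let E1 := wE1 g in let E2 := wE2 g in let F1 := wF1 g in let F2 := wF2 g in
  let K1 := wK1 g in let K1i := wK1i g in let K2 := wK2 g in
  let K2i := wK2i g in let I := wI g in
  let imA := K2i in
  let imB := (q - q^-1) ^+ 2 *: ((E1 + K1i * E2) * (F1 * K2 + F2))
             + q^-1 *: (K1 * K2) + q *: (K1i * K2i) in
  let imC := I * K1i - (q * (q - q^-1) ^+ 2) *: (E1 * F2 * K2i) in
  exists f : {lrmorphism H -> W},
    ([/\ f a = imA, f b = imB & f c = imC] /\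
     forall f' : {lrmorphism H -> W},
       [/\ f' a = imA, f' b = imB & f' c = imC] -> forall x, f' x = f x) /\
    [/\ f (Halpha q a b c) = Lambda2 q g + Lambda1 q g * K1i * K2i,
        f (Hbeta q a b c) = I * K1i * K2i
      & f (Hgamma q a b c) = Lambda1 q g + Lambda2 q g * K1i * K2i].
Proof.
case: hq => q_neq0 q_pow_neq1; case: hW => hW _.
have qdiff_neq0 := sub_inv_neq0 q_neq0 (q_pow_neq1 2%N isT).
have qsum_neq0 := add_inv_neq0 q_neq0 (q_pow_neq1 4%N isT).
have [f [[fa fb fc] f_unique]] :=
  hH.2 W _ _ _ (natural_Hrel q_neq0 qdiff_neq0 hW qsum_neq0).
exists f; split=> //.
rewrite lrmorph_Halpha lrmorph_Hbeta lrmorph_Hgamma fa fb fc.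
by rewrite natural_alpha // natural_beta // natural_gamma.
Qed.
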